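(* Let $(X,d),(Y,\rho)\in\mathfrak U$. Then $X\cong Y$ if and only if there exists a bijection $F:X\to Y$ that preserves balls.
   Context: $\operatorname{Sp}(X)=\{d(x,y):x\neq y\}$; $\mathfrak U$ is the class of finite ultrametric spaces $X$ with $|\operatorname{Sp}(X)|=|X|-1$. For a metric space $X$ and $t\in X$: $B_r(t)=\{x:d(x,t)\le r\}$, $\operatorname{Sp}_t(X)=\{d(x,t):x\neq t\}$, $\mathbf B_X=\{B_r(t):t\in X,\ r\in\operatorname{Sp}_t(X)\}$. A map $F:X\to Y$ between metric spaces preserves balls if $F(Z)\in\mathbf B_Y$ for every $Z\in\mathbf B_X$ and $F^{-1}(W)\in\mathbf B_X$ for every $W\in\mathbf B_Y$. For a finite ultrametric space $X$ (with $X\cap\operatorname{Sp}(X)=\varnothing$, achievable up to isometry), the representing tree $T_X$ is the labelled rooted tree defined recursively: for $X=\{x\}$ a single node labelled $x$; for $|X|\ge2$ the root is labelled $\operatorname{diam}X$ and has one child for each class $X_i$ of the equivalence relation $x\sim y\iff d(x,y)<\operatorname{diam}X$, labelled $x$ if $X_i=\{x\}$ and otherwise labelled $\operatorname{diam}X_i$ with the recursively constructed tree for $X_i$ below it. $\overline{T}_X$ is $T_X$ with labels erased, and $X\cong Y$ means $\overline T_X$ and $\overline T_Y$ are isomorphic rooted trees. *)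

From HB Require Import structures.
From mathcomp Require Import all_boot all_order all_algebra.
From mathcomp Require Import reals.
Set Implicit Arguments. Unset Strict Implicit. Unset Printing Implicit Defensive.
Import Order.TTheory GRing.Theory Num.Theory.
Local Open Scope ring_scope.

Definition ultrametric (R : realType) (T : finType) (d : T -> T -> R) : Prop :=
  [/\ forall x y, d x y = 0 <-> x = y,
      forall x y, d x y = d y x,
      forall x y, 0 <= d x y &
      forall x y z, d x z <= Num.max (d x y) (d y z)].

Definition Sp (R : realType) (T : finType) (d : T -> T -> R) : seq R :=
  undup [seq d p.1 p.2 | p in [pred p : T * T | p.1 != p.2]].

(* class U: finite (nonempty) ultrametric spaces with |Sp X| = |X| - 1 *)
Definition in_U (R : realType) (T : finType) (d : T -> T -> R) : Prop :=
  ultrametric d /\ (size (Sp d)).+1 = #|T|.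

Definition ball (R : realType) (T : finType) (d : T -> T -> R) (r : R) (t : T)
  : {set T} := [set x | d x t <= r].

(* Z \in B_X : Z = B_r(t) for some t and some r in Sp_t(X) *)
Definition is_ball (R : realType) (T : finType) (d : T -> T -> R) (Z : {set T})
  : Prop := exists t x, x != t /\ Z = ball d (d x t) t.

Definition preserves_balls (R : realType) (T U : finType)
  (d : T -> T -> R) (rho : U -> U -> R) (F : T -> U) : Prop :=
  (forall Z, is_ball d Z -> is_ball rho (F @: Z)) /\
  (forall W, is_ball rho W -> is_ball d (F @^-1: W)).

Inductive rtree := Node of seq rtree.
Definition leaf := Node [::].
Definition children (t : rtree) : seq rtree := let: Node s := t in s.

Inductive tree_iso : rtree -> rtree -> Prop :=
  | tree_iso_node (s t : seq rtree) (sigma : 'I_(size s) -> 'I_(size t)) :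
      bijective sigma ->
      (forall i : 'I_(size s), tree_iso (nth leaf s i) (nth leaf t (sigma i))) ->
      tree_iso (Node s) (Node t).

Definition diam (R : realType) (T : finType) (d : T -> T -> R) (A : {set T}) : R :=
  \big[Num.max/0]_(x in A) \big[Num.max/0]_(y in A) d x y.

Definition diam_classes (R : realType) (T : finType) (d : T -> T -> R)
  (A : {set T}) : {set {set T}} :=
  equivalence_partition (fun x y => d x y < diam d A) A.

(* unlabelled representing tree of the subspace A (fuel n >= #|A|) *)
Fixpoint rep_tree_aux (R : realType) (T : finType) (d : T -> T -> R)
  (n : nat) (A : {set T}) : rtree :=
  match n with
  | 0 => leaf
  | n'.+1 => if (#|A| <= 1)%N then leaf
             else Node [seq rep_tree_aux d n' C | C <- enum (diam_classes d A)]
  end.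

Definition rep_tree (R : realType) (T : finType) (d : T -> T -> R) : rtree :=
  rep_tree_aux d #|T| [set: T].

Definition ucong (R : realType) (T U : finType)
  (d : T -> T -> R) (rho : U -> U -> R) : Prop :=
  tree_iso (rep_tree d) (rep_tree rho).

From mathcomp Require Import all_boot all_order all_algebra.
From mathcomp Require Import reals.
Set Implicit Arguments. Unset Strict Implicit. Unset Printing Implicit Defensive.
Import Order.TTheory GRing.Theory Num.Theory.
Local Open Scope ring_scope.

(* For a ball A with at least two points, the classes of x ~ y <-> d x y < diam A
   are balls, and they are exactly the maximal proper sub-balls of A (singletons
   counting as balls).  Hence the representing tree is the tree of balls ordered
   by inclusion.  A bijection preserving balls maps the classes of every ball
   onto the classes of its image, which yields a tree isomorphism by induction
   on the ball.  Conversely, an isomorphism of representing trees matches the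
   classes of two balls, and gluing together the ball-preserving bijections
   between matched classes, obtained by induction, gives one between the balls.
   The condition |Sp X| = |X| - 1 is only used to know that X is nonempty. *)

Lemma imset_can (T U : finType) (f : T -> U) (g : U -> T) (X : {set T}) :
  cancel f g -> g @: (f @: X) = X.
Proof. by move=> fK; rewrite -imset_comp (eq_imset _ fK) imset_id. Qed.

Lemma set1_card_le1 (T : finType) (A : {set T}) a :
  (#|A| <= 1)%N -> a \in A -> A = [set a].
Proof. by move=> /card_le1P A1 aA; apply/setP => x; rewrite inE (A1 a aA x). Qed.

Section Partition.
Variables (T : finType) (P : {set {set T}}) (A : {set T}).
Hypothesis partP : partition P A.

Lemma partition_pblock_mem x : x \in A -> pblock P x \in P.
Proof. by case/and3P: partP => /eqP covP _ _ xA; rewrite pblock_mem ?covP. Qed.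

Lemma partition_mem_pblock x : x \in A -> x \in pblock P x.
Proof. by case/and3P: partP => /eqP covP _ _ xA; rewrite mem_pblock covP. Qed.

Lemma partition_def_pblock C x : C \in P -> x \in C -> pblock P x = C.
Proof. by case/and3P: partP => _ tiP _; apply: def_pblock. Qed.

Lemma partition_subset C : C \in P -> C \subset A.
Proof.
by case/and3P: partP => /eqP <- _ _ CP; apply/subsetP => x xC; apply/bigcupP; exists C.
Qed.

End Partition.

Section Ultrametric.
Variables (R : realType) (T : finType) (d : T -> T -> R).
Hypothesis hd : ultrametric d.

Lemma dist_eq0 x y : d x y = 0 <-> x = y. Proof. by case: hd. Qed.
Lemma dist0 x : d x x = 0. Proof. exact/dist_eq0. Qed.
Lemma distC x y : d x y = d y x. Proof. by case: hd. Qed.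
Lemma dist_ge0 x y : 0 <= d x y. Proof. by case: hd. Qed.

Lemma dist_gt0 x y : x != y -> 0 < d x y.
Proof.
by move=> xy; rewrite lt_def dist_ge0 andbT; apply: contra xy => /eqP/dist_eq0 ->.
Qed.

Lemma ultra_le x y z r : d x y <= r -> d y z <= r -> d x z <= r.
Proof.
by case: hd => _ _ _ max_le xy yz; apply: le_trans (max_le x y z) _; rewrite ge_max xy.
Qed.

Lemma ultra_lt x y z r : d x y < r -> d y z < r -> d x z < r.
Proof.
by case: hd => _ _ _ max_le xy yz; apply: le_lt_trans (max_le x y z) _; rewrite gt_max xy.
Qed.

Lemma ball_center r t : 0 <= r -> t \in ball d r t.
Proof. by rewrite inE dist0. Qed.

Lemma ball_dist0 t : ball d (d t t) t = [set t].
Proof.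
apply/setP => y; rewrite !inE dist0; apply/idP/eqP => [y0|->]; last by rewrite dist0.
by apply/dist_eq0/eqP; rewrite eq_le y0 dist_ge0.
Qed.

(* [is_ball d] admits only radii in Sp_t(X); [is_ball0] also admits radius 0,
   i.e. singletons. *)
Definition is_ball0 (Z : {set T}) := exists t x, Z = ball d (d x t) t.

Lemma ball0_nonempty Z : is_ball0 Z -> exists t, t \in Z.
Proof. by case=> t [x ->]; exists t; apply/ball_center/dist_ge0. Qed.

Lemma ball0_card_gt0 Z : is_ball0 Z -> (0 < #|Z|)%N.
Proof. by case/ball0_nonempty => t tZ; apply/card_gt0P; exists t. Qed.

Lemma ball0_set1 t : is_ball0 [set t].
Proof. by exists t, t; rewrite ball_dist0. Qed.

Lemma ball0_card_le1 (Z : {set T}) : (#|Z| <= 1)%N -> is_ball0 Z <-> Z != set0.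
Proof.
move=> Z1; split=> [/ball0_nonempty[t tZ]|/set0Pn[t tZ]]; first by apply/set0Pn; exists t.
by rewrite (set1_card_le1 Z1 tZ); apply: ball0_set1.
Qed.

Lemma ball0_setT (t : T) : is_ball0 [set: T].
Proof.
have [x _ xmax] := arg_maxP (fun x => d x t) (isT : xpredT t).
by exists t, x; apply/setP => y; rewrite !inE; symmetry; apply: xmax.
Qed.

Lemma is_ballE Z : is_ball d Z <-> is_ball0 Z /\ (1 < #|Z|)%N.
Proof.
split=> [[t [x [xt ->]]]|[[t [x ->]] Z1]].
  split; first by exists t, x.
  by apply/card_gt1P; exists x, t; rewrite !inE lexx dist0 dist_ge0.
exists t, x; split=> //; apply: contraTneq Z1 => ->.
by rewrite ball_dist0 cards1.
Qed.

Lemma ball0_card_gt1 (Z : {set T}) : (1 < #|Z|)%N -> is_ball0 Z <-> is_ball d Z.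
Proof. by move=> Z1; rewrite is_ballE //; split=> // -[]. Qed.

Lemma le_diam (A : {set T}) x y : x \in A -> y \in A -> d x y <= diam d A.
Proof. by move=> xA yA; apply: le_trans (le_bigmax_cond _ _ xA); apply: le_bigmax_cond. Qed.

Lemma diam_le (A : {set T}) c :
  0 <= c -> (forall x y, x \in A -> y \in A -> d x y <= c) -> diam d A <= c.
Proof.
move=> c0 Ac; apply/bigmax_leP; split=> // x xA.
by apply/bigmax_leP; split=> // y yA; apply: Ac.
Qed.

Lemma diam_gt0 (A : {set T}) : (1 < #|A|)%N -> 0 < diam d A.
Proof.
by case/card_gt1P => x [y [xA yA xy]]; apply: lt_le_trans (dist_gt0 xy) (le_diam xA yA).
Qed.

Lemma diam_attained (A : {set T}) x0 : x0 \in A ->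
  exists a b, [/\ a \in A, b \in A & d a b = diam d A].
Proof.
move=> x0A; pose inA2 (p : T * T) := (p.1 \in A) && (p.2 \in A).
have [[a b] /andP[/= aA bA] pmax] :=
  arg_maxP (fun p : T * T => d p.1 p.2) (introT andP (conj x0A x0A) : inA2 (x0, x0)).
exists a, b; split=> //; apply/eqP; rewrite eq_le le_diam //= diam_le ?dist_ge0 //.
by move=> u v uA vA; apply: (pmax (u, v)); rewrite /inA2 uA vA.
Qed.

Section DiamClasses.
Variable A : {set T}.
Hypothesis A1 : (1 < #|A|)%N.

Lemma diam_classes_equiv :
  {in A & &, equivalence_rel (fun x y => d x y < diam d A)}.
Proof.
move=> x y z _ _ _; split; first by rewrite dist0 diam_gt0.
move=> xy; apply/idP/idP => [xz|yz]; last exact: ultra_lt xy yz.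
by apply: ultra_lt xz; rewrite distC.
Qed.

Lemma diam_classes_partition : partition (diam_classes d A) A.
Proof. exact: equivalence_partitionP diam_classes_equiv. Qed.

Lemma pblock_diam_classes x : x \in A ->
  pblock (diam_classes d A) x = [set y in A | d x y < diam d A].
Proof.
move=> xA; apply/setP => y; rewrite inE; have [yA|yNA] /= := boolP (y \in A).
  by rewrite (pblock_equivalence_partition diam_classes_equiv).
apply: contraNF yNA => /(subsetP (partition_subset diam_classes_partition
  (partition_pblock_mem diam_classes_partition xA))); exact.
Qed.

Lemma diam_classP C : C \in diam_classes d A ->
  exists2 x, x \in A & C = [set y in A | d x y < diam d A].
Proof.
move=> CP; have /set0Pn[x xC] : C != set0.
  by apply: contraTneq CP => ->; case/and3P: diam_classes_partition.
have xA := subsetP (partition_subset diam_classes_partition CP) x xC.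
by exists x; rewrite // -pblock_diam_classes //
  (partition_def_pblock diam_classes_partition CP xC).
Qed.

Lemma card_diam_classes_gt0 : (0 < #|diam_classes d A|)%N.
Proof.
have [x [y [xA _ _]]] := card_gt1P A1.
by apply/card_gt0P; exists (pblock (diam_classes d A) x);
  apply: (partition_pblock_mem diam_classes_partition xA).
Qed.

Lemma diam_class_proper C : C \in diam_classes d A -> C \proper A.
Proof.
move=> CP; rewrite properEneq (partition_subset diam_classes_partition CP) andbT.
have [x xA defC] := diam_classP CP; have [a [b [aA bA dab]]] := diam_attained xA.
apply/eqP => CA; have: a \in C /\ b \in C by rewrite CA.
rewrite defC !inE -dab => -[/andP[_ xa] /andP[_ xb]].
suff: d a b < d a b by rewrite ltxx.
by apply: ultra_lt xb; rewrite distC.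
Qed.

End DiamClasses.

Lemma ball0_diam (A : {set T}) t : is_ball0 A -> t \in A -> A = ball d (diam d A) t.
Proof.
case=> t0 [x0 defA] tA; have dA_le : diam d A <= d x0 t0.
  apply: diam_le; first exact: dist_ge0.
  by move=> u v; rewrite defA !inE => ut0 vt0; apply: ultra_le ut0 _; rewrite distC.
apply/setP => y; rewrite [in RHS]inE; apply/idP/idP => [yA|yt]; first exact: le_diam.
move: tA; rewrite defA !inE; exact: ultra_le (le_trans yt dA_le).
Qed.

Section BallClasses.
Variable A : {set T}.
Hypotheses (hA : is_ball0 A) (A1 : (1 < #|A|)%N).

Lemma diam_class_ball0 C : C \in diam_classes d A -> is_ball0 C.
Proof.
case/(diam_classP A1) => x xA ->; set C0 := [set y in A | _].
have xC : x \in C0 by rewrite inE xA dist0 diam_gt0.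
have [y yC ymax] := arg_maxP (fun y => d y x) xC.
exists x, y; apply/setP => z; rewrite [in RHS]inE; apply/idP/idP => [zC|zy].
  exact: ymax.
have : y \in C0 := yC; rewrite inE => /andP[_ xy].
have xz : d x z < diam d A by rewrite distC; apply: le_lt_trans zy _; rewrite distC.
by rewrite inE xz andbT (ball0_diam hA xA) inE distC ltW.
Qed.

Lemma ball0_sub_diam_class Z : is_ball0 Z -> Z \proper A ->
  exists2 C, C \in diam_classes d A & Z \subset C.
Proof.
case=> t [z defZ] ZA; have ZsubA := proper_sub ZA.
have tA : t \in A by apply/(subsetP ZsubA); rewrite defZ ball_center ?dist_ge0.
have [dA_le|zt_lt] := leP (diam d A) (d z t).
  suff: A \subset Z by rewrite (negbTE (proper_subn ZA)).
  apply/subsetP => y; rewrite (ball0_diam hA tA) defZ !inE.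
  by move/le_trans; apply.
exists (pblock (diam_classes d A) t).
  exact (partition_pblock_mem (diam_classes_partition A1) tA).
rewrite pblock_diam_classes //; apply/subsetP => y yZ.
rewrite inE (subsetP ZsubA y yZ) distC; move: yZ; rewrite defZ inE.
by move/le_lt_trans; apply.
Qed.

Lemma diam_class_max C Z : C \in diam_classes d A ->
  is_ball0 Z -> C \subset Z -> Z \proper A -> Z = C.
Proof.
move=> CP hZ CZ ZA; have [C' C'P ZC'] := ball0_sub_diam_class hZ ZA.
have partA := diam_classes_partition A1.
have /set0Pn[x xC] : C != set0 by apply: contraTneq CP => ->; case/and3P: partA.
have eC : C' = C.
  rewrite -(partition_def_pblock partA CP xC).
  by apply/esym/(partition_def_pblock partA C'P)/(subsetP ZC')/(subsetP CZ).
by apply/eqP; rewrite eqEsubset CZ andbT -eC.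
Qed.

End BallClasses.
End Ultrametric.

Lemma tree_iso_leaf : tree_iso leaf leaf.
Proof. by apply: (@tree_iso_node [::] [::] id); [exists id | case]. Qed.

Lemma tree_iso_NodeP s t : tree_iso (Node s) (Node t) ->
  exists2 sigma : 'I_(size s) -> 'I_(size t), bijective sigma &
    forall i : 'I_(size s), tree_iso (nth leaf s i) (nth leaf t (sigma i)).
Proof.
suff: forall u v, tree_iso u v ->
    exists2 sigma : 'I_(size (children u)) -> 'I_(size (children v)), bijective sigma &
      forall i : 'I_(size (children u)),
        tree_iso (nth leaf (children u) i) (nth leaf (children v) (sigma i)).
  exact.
by move=> u v [{}s {}t sigma sigmaB iso_i]; exists sigma.
Qed.

Lemma tree_iso_size s t : tree_iso (Node s) (Node t) -> size s = size t.
Proof. by case/tree_iso_NodeP => sigma /bij_eq_card; rewrite !card_ord. Qed.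

Section TreeIsoMap.
Variables (X Y : eqType) (f : X -> rtree) (g : Y -> rtree) (s : seq X) (t : seq Y).
Hypotheses (s_uniq : uniq s) (t_uniq : uniq t).

Lemma tree_iso_mapP (x0 : X) (y0 : Y) :
  tree_iso (Node (map f s)) (Node (map g t)) ->
  exists h : X -> Y, [/\ {in s &, injective h}, {in s, forall x, h x \in t},
    {in t, forall y, exists2 x, x \in s & y = h x} &
    {in s, forall x, tree_iso (f x) (g (h x))}].
Proof.
case/tree_iso_NodeP => sigma [sigma' sigmaK sigmaK'] iso_i.
have s_idx (i : 'I_(size (map f s))) : (i < size s)%N by rewrite -(size_map f) ltn_ord.
have t_idx (j : 'I_(size (map g t))) : (j < size t)%N by rewrite -(size_map g) ltn_ord.
pose h x := if insub (index x s) is Some i then nth y0 t (sigma i) else y0.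
have hE x : x \in s -> exists2 i : 'I_(size (map f s)), val i = index x s &
    h x = nth y0 t (sigma i).
  move=> xs; rewrite /h; case: insubP => [i _ <-|]; first by exists i.
  by move=> /negP[]; rewrite size_map index_mem.
exists h; split.
- move=> x x' xs x's; case: (hE x xs) => i xi ->; case: (hE x' x's) => i' x'i' ->.
  move/eqP; rewrite nth_uniq ?t_idx // => /eqP/val_inj/(can_inj sigmaK) ii'.
  by rewrite -(nth_index x0 xs) -(nth_index x0 x's) -xi -x'i' ii'.
- by move=> x xs; case: (hE x xs) => i _ ->; apply: mem_nth.
- move=> y yt; have jP : (index y t < size (map g t))%N by rewrite size_map index_mem.
  pose i := sigma' (Ordinal jP); exists (nth x0 s i); first exact: mem_nth.
  case: (hE _ (mem_nth x0 (s_idx i))) => i'; rewrite index_uniq // => /val_inj -> ->.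
  by rewrite sigmaK' nth_index.
- move=> x xs; case: (hE x xs) => i xi ->.
  by have := iso_i i; rewrite (nth_map x0) // (nth_map y0) // xi nth_index.
Qed.

Lemma tree_iso_map (h : X -> Y) (x0 : X) :
  {in s &, injective h} -> {in s, forall x, h x \in t} ->
  {in t, forall y, exists2 x, x \in s & y = h x} ->
  {in s, forall x, tree_iso (f x) (g (h x))} ->
  tree_iso (Node (map f s)) (Node (map g t)).
Proof.
move=> h_inj hst h_onto iso_h.
have s_idx (i : 'I_(size (map f s))) : (i < size s)%N by rewrite -(size_map f) ltn_ord.
have hs_t (i : 'I_(size (map f s))) : h (nth x0 s i) \in t.
  by apply/hst/mem_nth; apply: s_idx.
have hs_perm : perm_eq (map h s) t.
  apply: uniq_perm => [||y]; rewrite ?map_inj_in_uniq //.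
  apply/mapP/idP => [[x xs ->]|yt]; first exact: hst.
  by have [x xs ->] := h_onto y yt; exists x.
have sigmaP (i : 'I_(size (map f s))) : (index (h (nth x0 s i)) t < size (map g t))%N.
  by rewrite (size_map g) index_mem.
apply: (@tree_iso_node _ _ (fun i => Ordinal (sigmaP i))) => [|i].
  apply: inj_card_bij; last by rewrite !card_ord !size_map -(perm_size hs_perm) size_map.
  move=> i i' /(congr1 val) /= /(congr1 (nth (h x0) t)).
  rewrite !nth_index // => /h_inj; rewrite !mem_nth // => /(_ isT isT) /eqP.
  by rewrite nth_uniq // => /eqP /val_inj.
rewrite (nth_map x0) // (nth_map (h x0)) /= ?index_mem // nth_index //.
exact/iso_h/mem_nth.
Qed.

End TreeIsoMap.

Definition ball0_preserving (R : realType) (T U : finType)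
    (d : T -> T -> R) (rho : U -> U -> R) (F : T -> U) :=
  forall Z, is_ball0 d Z <-> is_ball0 rho (F @: Z).

Lemma ball0_preserving_can (R : realType) (T U : finType)
    (d : T -> T -> R) (rho : U -> U -> R) (F : T -> U) (G : U -> T) :
  cancel G F -> ball0_preserving d rho F -> ball0_preserving rho d G.
Proof. by move=> GK presF W; rewrite (presF (G @: W)) imset_can. Qed.

Section BallMaps.
Variables (R : realType) (T U : finType) (d : T -> T -> R) (rho : U -> U -> R).
Hypotheses (hd : ultrametric d) (hr : ultrametric rho).

Lemma preserves_ballsE F : bijective F ->
  preserves_balls d rho F <-> ball0_preserving d rho F.
Proof.
case=> G FK GK.
have cardF (Z : {set T}) : #|F @: Z| = #|Z| by apply: card_imset; apply: can_inj FK.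
have cardG (W : {set U}) : #|G @: W| = #|W| by apply: card_imset; apply: can_inj GK.
have preimF (W : {set U}) : F @^-1: W = G @: W by rewrite (can2_imset_pre _ GK FK).
split=> [[presF reflF] Z|presF].
  have [Z1|Z1] := leqP #|Z| 1.
    by rewrite !ball0_card_le1 ?cardF // imset_eq0.
  rewrite !ball0_card_gt1 ?cardF //; split=> [/presF //|/reflF].
  by rewrite preimF imset_can.
split=> [Z|W]; rewrite !is_ballE // ?cardF ?preimF ?cardG; case=> ballZ Z1; split=> //.
  exact/presF.
by apply/presF; rewrite imset_can.
Qed.

Lemma imset_diam_class F A C : bijective F -> ball0_preserving d rho F ->
  is_ball0 d A -> (1 < #|A|)%N -> C \in diam_classes d A ->
  F @: C \in diam_classes rho (F @: A).
Proof.
case=> G FK GK presF hA A1 CP; have F_inj := can_inj FK.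
have hFA : is_ball0 rho (F @: A) by apply/presF.
have FA1 : (1 < #|F @: A|)%N by rewrite card_imset.
have CA := diam_class_proper hd A1 CP.
have FCA : F @: C \proper F @: A.
  rewrite properEneq imsetS ?(proper_sub CA) // andbT.
  by rewrite (inj_eq (imset_inj F_inj)) (proper_neq CA).
have hFC : is_ball0 rho (F @: C) by apply/presF/(diam_class_ball0 hd hA A1 CP).
have [D DP FCD] := ball0_sub_diam_class hr hFA FA1 hFC FCA.
have DFA := diam_class_proper hr FA1 DP.
suff <-: G @: D = C by rewrite imset_can.
apply: (diam_class_max hd hA A1 CP).
- exact/(ball0_preserving_can GK presF)/(diam_class_ball0 hr hFA FA1).
- by rewrite -(imset_can C FK) imsetS.
- rewrite -(imset_can A FK) properEneq imsetS ?(proper_sub DFA) // andbT.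
  by rewrite (inj_eq (imset_inj (can_inj GK))) (proper_neq DFA).
Qed.

End BallMaps.

Lemma rep_tree_aux_imset (R : realType) (T U : finType) (d : T -> T -> R)
    (rho : U -> U -> R) (F : T -> U) :
  ultrametric d -> ultrametric rho -> bijective F -> ball0_preserving d rho F ->
  forall n A, is_ball0 d A -> (#|A| <= n)%N ->
  tree_iso (rep_tree_aux d n A) (rep_tree_aux rho n (F @: A)).
Proof.
move=> hd hr bijF presF; have [G FK GK] := bijF; have bijG : bijective G by exists F.
have presG := ball0_preserving_can GK presF.
have cardF (A : {set T}) : #|F @: A| = #|A| by apply: card_imset; apply: can_inj FK.
elim=> [|n IHn] A hA An /=; first exact: tree_iso_leaf.
rewrite cardF; case: leqP => A1; first exact: tree_iso_leaf.
apply: (@tree_iso_map _ _ _ _ _ _ (enum_uniq _) (enum_uniq _)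
  (fun C : {set T} => F @: C) set0).
- by move=> C C' _ _; apply/imset_inj/can_inj/FK.
- by move=> C; rewrite !mem_enum; apply: imset_diam_class.
- move=> D; rewrite !mem_enum => DP; exists (G @: D); last by rewrite imset_can.
  rewrite mem_enum -(imset_can A FK); apply: (imset_diam_class hr hd bijG presG) => //.
    exact/(presF A).
  by rewrite cardF.
- move=> C; rewrite mem_enum => CP; apply: IHn; first exact: diam_class_ball0 CP.
  by rewrite -ltnS (leq_trans (proper_card (diam_class_proper hd A1 CP))).
Qed.

Section Glue.
Variables (T U : finType) (A : {set T}) (B : {set U}).
Variables (P : {set {set T}}) (Q : {set {set U}}).
Variables (h : {set T} -> {set U}) (G : {set T} -> T -> U).
Hypotheses (partP : partition P A) (partQ : partition Q B).
Hypotheses (hPQ : {in P, forall C, h C \in Q}) (h_inj : {in P &, injective h}).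
Hypothesis h_onto : {in Q, forall D, exists2 C, C \in P & D = h C}.
Hypothesis G_bij :
  {in P, forall C : {set T}, {in C &, injective (G C)} /\ G C @: C = h C}.

Definition glue x := G (pblock P x) x.

Lemma glue_imset (C Z : {set T}) : C \in P -> Z \subset C -> glue @: Z = G C @: Z.
Proof.
move=> CP ZC; apply: eq_in_imset => z zZ.
by rewrite /glue (partition_def_pblock partP CP (subsetP ZC z zZ)).
Qed.

Lemma glue_mem x : x \in A -> glue x \in h (pblock P x).
Proof.
move=> xA; have [_ <-] := G_bij (partition_pblock_mem partP xA).
exact/imset_f/(partition_mem_pblock partP).
Qed.

Lemma pblock_glue x : x \in A -> pblock Q (glue x) = h (pblock P x).
Proof.
move=> xA; apply: (partition_def_pblock partQ); last exact: glue_mem.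
exact/hPQ/(partition_pblock_mem partP).
Qed.

Lemma glue_inj : {in A &, injective glue}.
Proof.
move=> x y xA yA gxy; have Px := partition_pblock_mem partP xA.
have Pxy : pblock P x = pblock P y.
  by apply: h_inj => //; [apply: partition_pblock_mem yA | rewrite -!pblock_glue // gxy].
have [G_inj _] := G_bij Px; apply: G_inj.
- exact (partition_mem_pblock partP xA).
- by rewrite Pxy (partition_mem_pblock partP yA).
- by move: gxy; rewrite /glue Pxy.
Qed.

Lemma glue_onto : glue @: A = B.
Proof.
apply/setP => y; apply/imsetP/idP => [[x xA ->]|yB].
  apply: (subsetP (partition_subset partQ (hPQ (partition_pblock_mem partP xA)))).
  exact: glue_mem.
have [C CP defD] := h_onto (partition_pblock_mem partQ yB).
have [_ GC] := G_bij CP.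
have /imsetP[x xC ->] : y \in G C @: C by rewrite GC -defD (partition_mem_pblock partQ yB).
exists x; first exact: (subsetP (partition_subset partP CP)).
by rewrite /glue (partition_def_pblock partP CP xC).
Qed.

Lemma glue_subset (C Z : {set T}) :
  C \in P -> Z \subset A -> glue @: Z \subset h C -> Z \subset C.
Proof.
move=> CP ZA gZC; apply/subsetP => z zZ; have zA := subsetP ZA z zZ.
have: pblock Q (glue z) = h C.
  by apply: (partition_def_pblock partQ (hPQ CP)); apply/(subsetP gZC)/imset_f.
have Pz := partition_pblock_mem partP zA.
by rewrite pblock_glue // => /h_inj <- //; apply: (partition_mem_pblock partP zA).
Qed.

End Glue.

Definition ball0_iso_on (R : realType) (T U : finType) (d : T -> T -> R)
    (rho : U -> U -> R) (A : {set T}) (B : {set U}) (F : T -> U) :=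
  [/\ {in A &, injective F}, F @: A = B &
      forall Z : {set T}, Z \subset A -> is_ball0 d Z <-> is_ball0 rho (F @: Z)].

Section GlueBalls.
Variables (R : realType) (T U : finType) (d : T -> T -> R) (rho : U -> U -> R).
Hypotheses (hd : ultrametric d) (hr : ultrametric rho).
Variables (A : {set T}) (B : {set U}).
Hypotheses (hA : is_ball0 d A) (A1 : (1 < #|A|)%N).
Hypotheses (hB : is_ball0 rho B) (B1 : (1 < #|B|)%N).
Variables (h : {set T} -> {set U}) (G : {set T} -> T -> U).
Hypothesis hPQ : {in diam_classes d A, forall C, h C \in diam_classes rho B}.
Hypothesis h_inj : {in diam_classes d A &, injective h}.
Hypothesis h_onto :
  {in diam_classes rho B, forall D, exists2 C, C \in diam_classes d A & D = h C}.
Hypothesis G_iso :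
  {in diam_classes d A, forall C, ball0_iso_on d rho C (h C) (G C)}.

Lemma glue_ball0_iso_on : ball0_iso_on d rho A B (glue (diam_classes d A) G).
Proof.
have partA := diam_classes_partition hd A1; have partB := diam_classes_partition hr B1.
have G_bij : {in diam_classes d A, forall C : {set T},
    {in C &, injective (G C)} /\ G C @: C = h C}.
  by move=> C /G_iso[].
set F := glue _ G; have F_inj := glue_inj partA partB hPQ h_inj G_bij.
have FA := glue_onto partA partB hPQ h_onto G_bij.
split=> // Z ZA; have [->|ZnA] := eqVneq Z A; first by rewrite FA.
have ZpA : Z \proper A by rewrite properEneq ZnA.
split=> [hZ|hFZ].
  have [C CP ZC] := ball0_sub_diam_class hd hA A1 hZ ZpA.
  have [_ _ presC] := G_iso CP; rewrite (glue_imset _ partA CP ZC).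
  exact/presC.
have FZpB : F @: Z \proper B.
  rewrite -FA properEcard imsetS //= !card_in_imset //; first exact: proper_card.
  by move=> x y xZ yZ; apply: F_inj; apply: (subsetP ZA).
have [D DP FZD] := ball0_sub_diam_class hr hB B1 hFZ FZpB.
have [C CP defD] := h_onto DP; rewrite defD in FZD.
have ZC := glue_subset partA partB hPQ h_inj G_bij CP ZA FZD.
have [_ _ presC] := G_iso CP; rewrite (glue_imset _ partA CP ZC) in hFZ.
exact/presC.
Qed.

End GlueBalls.

Lemma ball0_iso_on_card_le1 (R : realType) (T U : finType) (d : T -> T -> R)
    (rho : U -> U -> R) (A : {set T}) (B : {set U}) a b :
  ultrametric d -> ultrametric rho -> (#|A| <= 1)%N -> (#|B| <= 1)%N ->
  a \in A -> b \in B -> ball0_iso_on d rho A B (fun _ => b).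
Proof.
move=> hd hr A1 B1 aA bB; rewrite (set1_card_le1 A1 aA) (set1_card_le1 B1 bB).
split=> [x y /set1P-> /set1P-> //||Z]; first by rewrite imset_set1.
rewrite subset1 => /orP[]/eqP->; first by rewrite imset_set1; split=> _; apply: ball0_set1.
by rewrite imset0; split=> [/(ball0_nonempty hd)|/(ball0_nonempty hr)] [t]; rewrite inE.
Qed.

Lemma rep_tree_iso_ball0_iso_on (R : realType) (T U : finType) (d : T -> T -> R)
    (rho : U -> U -> R) :
  ultrametric d -> ultrametric rho ->
  forall n A m B, is_ball0 d A -> is_ball0 rho B -> (#|A| <= n)%N -> (#|B| <= m)%N ->
  tree_iso (rep_tree_aux d n A) (rep_tree_aux rho m B) ->
  exists F, ball0_iso_on d rho A B F.
Proof.
move=> hd hr; elim=> [|n IHn] A m B hA hB An Bm.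
  by move: (leq_trans (ball0_card_gt0 hd hA) An).
case: m Bm => [|m] Bm /=; first by move: (leq_trans (ball0_card_gt0 hr hB) Bm).
have [a aA] := ball0_nonempty hd hA; have [b bB] := ball0_nonempty hr hB.
case: leqP => A1; case: leqP => B1 isoAB.
- by exists (fun _ => b); apply: ball0_iso_on_card_le1 aA bB.
- move/tree_iso_size: isoAB; rewrite size_map -cardE => cardB.
  by move: (card_diam_classes_gt0 hr B1); rewrite -cardB.
- move/tree_iso_size: isoAB; rewrite size_map -cardE => cardA.
  by move: (card_diam_classes_gt0 hd A1); rewrite cardA.
have [h [h_inj hPQ h_onto iso_h]] :=
  tree_iso_mapP (enum_uniq _) (enum_uniq _) set0 set0 isoAB.
have [G G_iso] : exists G, forall C,
    C \in diam_classes d A -> ball0_iso_on d rho C (h C) (G C).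
  apply: (@fin_all_exists _ (fun=> T -> U)
    (fun C GC => C \in diam_classes d A -> ball0_iso_on d rho C (h C) GC)) => C.
  case CP: (C \in diam_classes d A); last by exists (fun=> b).
  have CP' : C \in enum (diam_classes d A) by rewrite mem_enum.
  have DP : h C \in diam_classes rho B by rewrite -mem_enum hPQ.
  have [GC isoGC] := IHn C m (h C) (diam_class_ball0 hd hA A1 CP)
    (diam_class_ball0 hr hB B1 DP)
    (leq_trans (proper_card (diam_class_proper hd A1 CP)) An)
    (leq_trans (proper_card (diam_class_proper hr B1 DP)) Bm) (iso_h C CP').
  by exists GC.
exists (glue (diam_classes d A) G); apply: (glue_ball0_iso_on hd hr hA A1 hB B1 (h := h)).
- by move=> C CP; rewrite -mem_enum hPQ ?mem_enum.
- by move=> C C' CP C'P; apply: h_inj; rewrite mem_enum.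
- move=> D; rewrite -mem_enum => /h_onto[C CP ->].
  by exists C; rewrite // -mem_enum.
- exact: G_iso.
Qed.

Theorem theorem24 (R : realType) (T U : finType)
  (d : T -> T -> R) (rho : U -> U -> R) :
  in_U d -> in_U rho ->
  (ucong d rho <-> exists F : T -> U, bijective F /\ preserves_balls d rho F).
Proof.
move=> [hd cardT] [hr cardU].
have /card_gt0P[t0 _] : (0 < #|T|)%N by rewrite -cardT.
have /card_gt0P[u0 _] : (0 < #|U|)%N by rewrite -cardU.
rewrite /ucong /rep_tree; split=> [isoTU|[F [bijF presF]]].
  have [F [F_inj FT presF]] := rep_tree_iso_ball0_iso_on hd hr (ball0_setT d t0)
    (ball0_setT rho u0) (eq_leq (cardsT T)) (eq_leq (cardsT U)) isoTU.
  have {}F_inj : injective F by move=> x y; apply: F_inj; rewrite inE.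
  have bijF : bijective F.
    by apply: (inj_card_bij F_inj); rewrite -(cardsT U) -FT card_imset // cardsT.
  by exists F; split; rewrite // preserves_ballsE // => Z; apply/presF/subsetT.
have [G FK GK] := bijF; move/(preserves_ballsE hd hr bijF): presF => presF.
have := rep_tree_aux_imset hd hr bijF presF (ball0_setT d t0) (eq_leq (cardsT T)).
by rewrite (can2_imset_pre _ FK GK) preimsetT (bij_eq_card bijF).
Qed.
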